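(* Consider the following game over slots $1,\dots,T$ with $N\ge2$ users. The BS chooses a pmf $\mathbf p$ and in every slot, independently, schedules user $i$ with probability $p_i$. The adversary chooses a blocking matrix $\sigma\in\{0,1\}^{N\times T}$, where $\sigma_i(t)=0$ means user $i$ is blocked in slot $t$. Feasibility means $\sum_{i,t}(1-\sigma_i(t))\le\alpha T$ and at most one user is blocked per slot, where $0<\alpha<1$. Ages satisfy $a_i(1)=1$ and $a_i(t+1)=1$ if user $i$ is scheduled and not blocked in slot $t$, and $a_i(t+1)=a_i(t)+1$ otherwise. The payoff is $\Delta^{\mathbf p,\sigma}=\frac1T\sum_{t=1}^T\frac1N\sum_i\mathbb E[a_i(t)]$. Let $\bar{\mathbf p}$ be the uniform pmf ($p_i=\frac1N$). Let $\bar\sigma$ block one arbitrary user exactly in the slots $\frac{(1-\alpha)T}{2}+1,\dots,\frac{(1+\alpha)T}2$ and nothing else. Then, for all sufficiently large $T$ with $\alpha T\in\mathbb Z$ and $(1-\alpha)T$ even, $(\bar{\mathbf p},\bar\sigma)$ is a Stackelberg equilibrium with the BS as leader. That is: - $\bar\sigma$ maximizes $\Delta^{\bar{\mathbf p},\sigma}$ over feasible $\sigma$; and - $\bar{\mathbf p}$ minimizes $\max_{\sigma\text{ feasible}}\Delta^{\mathbf p,\sigma}$ over all pmfs $\mathbf p$. *)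

From mathcomp Require Import all_boot all_order all_algebra.
From mathcomp Require Import reals.
Set Implicit Arguments. Unset Strict Implicit. Unset Printing Implicit Defensive.
Import Order.TTheory GRing.Theory Num.Theory.
Local Open Scope ring_scope.

(* Slots 1..T are represented by ordinals u : 'I_T (slot u+1).
   A blocking matrix sigma : 'I_N -> 'I_T -> bool, with sigma i u = false
   meaning user i is blocked in slot u+1. *)

(* age s sigma i k = a_i(k+1) : a_i(1) = 1, and
   a_i(t+1) = 1 if i is scheduled and not blocked in slot t, else a_i(t)+1. *)
Fixpoint age (N T : nat) (s : {ffun 'I_T -> 'I_N}) (sigma : 'I_N -> 'I_T -> bool)
    (i : 'I_N) (k : nat) : nat :=
  match k with
  | 0 => 1
  | k'.+1 =>
      if [exists u : 'I_T, [&& val u == k', s u == i & sigma i u]] then 1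
      else (age s sigma i k').+1
  end.

Definition pmf (R : realType) (N : nat) (p : 'I_N -> R) : Prop :=
  (forall i, 0 <= p i) /\ \sum_(i < N) p i = 1.

Definition sched_prob (R : realType) (N T : nat) (p : 'I_N -> R)
    (s : {ffun 'I_T -> 'I_N}) : R :=
  \prod_(u < T) p (s u).

(* E[a_i(u+1)] *)
Definition exp_age (R : realType) (N T : nat) (p : 'I_N -> R)
    (sigma : 'I_N -> 'I_T -> bool) (i : 'I_N) (u : 'I_T) : R :=
  \sum_(s : {ffun 'I_T -> 'I_N}) sched_prob p s * (age s sigma i u)%:R.

Definition payoff (R : realType) (N T : nat) (p : 'I_N -> R)
    (sigma : 'I_N -> 'I_T -> bool) : R :=
  (T%:R)^-1 * \sum_(u < T) ((N%:R)^-1 * \sum_(i < N) exp_age p sigma i u).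

Definition feasible (R : realType) (N T : nat) (alpha : R)
    (sigma : 'I_N -> 'I_T -> bool) : Prop :=
  (\sum_(i < N) \sum_(u < T) ((~~ sigma i u : nat)%:R : R)) <= alpha * T%:R /\
  (forall u : 'I_T, (\sum_(i < N) (~~ sigma i u : nat) <= 1)%N).

Definition unif (R : realType) (N : nat) : 'I_N -> R := fun _ => (N%:R)^-1.

(* sigma_bar: block user j exactly in slots m+1, ..., m+k (1-based), where
   m = (1-alpha)T/2 and k = alpha T; i.e. ordinals u with m <= u < m+k. *)
Definition sigma_bar (N T : nat) (j : 'I_N) (m k : nat) : 'I_N -> 'I_T -> bool :=
  fun i u => ~~ ((i == j) && (m <= val u < m + k)%N).

From mathcomp Require Import all_boot all_order all_algebra.
From mathcomp Require Import reals.
From mathcomp Require Import ring lra zify.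
Set Implicit Arguments. Unset Strict Implicit. Unset Printing Implicit Defensive.
Import Order.TTheory GRing.Theory Num.Theory.
Local Open Scope ring_scope.

(* The age a_i(t) is the number of s <= t such that user i is not served in any slot
   of [s, t), so E[a_i(t)] = sum_(s <= t) (1 - p_i)^(number of unblocked slots of i
   in [s, t)) and the payoff is a sum over the users of such "age sums".
   Against the uniform pmf every user has the weight y^e with y = 1 - 1/N.  As at most
   one user is blocked per slot, y^(n-a) + y^(n-b) <= y^n + y^(n-a-b) shows that moving
   all blocks onto a single user can only increase the payoff.  For a single user, twice
   the age sum is the sum over all pairs of slots of y^(number of unblocked slots between
   them); since the partial sums of the nonincreasing y^e are concave, this is maximal
   when the k blocked slots form one block in the middle of the horizon.
   For the leader, every pmf p has a user j with p_j <= 1/N.  Blocking j in the middle,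
   convexity of x |-> x^e at x = y bounds the payoff below by the uniform payoff plus
   (1/N - p_j) times the increase of the age sum with derivative weights e y^(e-1) caused
   by the middle block; that increase is nonnegative as soon as the tail
   sum_(e > T/2) e y^(e-1) is at most 1, i.e. for large T. *)

Section PrefixCount.

Variable c : nat -> bool.

Definition prefix_count (x : nat) : nat := (\sum_(v < x) c v)%N.

Lemma prefix_countS x : prefix_count x.+1 = (prefix_count x + c x)%N.
Proof. by rewrite /prefix_count big_ord_recr. Qed.

Lemma leq_prefix_count : {homo prefix_count : x y / (x <= y)%N}.
Proof.
move=> x y /subnK <-; elim: (y - x)%N => [|d IH] //=.
by rewrite addSn prefix_countS (leq_trans IH) // leq_addr.
Qed.

Lemma prefix_count_blocked x : (prefix_count x + \sum_(v < x) ~~ c v)%N = x.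
Proof.
by rewrite -big_split /= (eq_bigr (fun=> 1%N)) ?sum1_card ?card_ord // => v _; case: (c v).
Qed.

Lemma window_count a u : (a <= u)%N ->
  (\sum_(a <= v < u) c v)%N = `|prefix_count a - prefix_count u|%N.
Proof.
move=> hau; rewrite /prefix_count -!(big_mkord xpredT (fun v => nat_of_bool (c v))).
rewrite (@big_cat_nat _ _ _ a 0 u) //=; lia.
Qed.

Lemma window_count_blocked a u :
  (\sum_(a <= v < u) c v + \sum_(a <= v < u) ~~ c v)%N = (u - a)%N.
Proof.
rewrite -big_split /= (eq_bigr (fun=> 1%N)) ?sum_nat_const_nat ?muln1 // => v _.
by case: (c v).
Qed.

Definition after_block (a : nat) : bool := (0 < a)%N && ~~ c a.-1.

Lemma sum_not_after_block (R : nmodType) (g : nat -> R) L :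
  \sum_(a < L.+1 | ~~ after_block a) g (prefix_count a) =
  \sum_(t < (prefix_count L).+1) g t.
Proof.
elim: L => [|L IH].
  by rewrite /after_block /prefix_count big_mkcond !big_ord1 /= big_ord0 big_ord1.
rewrite big_mkcond big_ord_recr /= -big_mkcond /= IH prefix_countS /after_block /=.
case: (c L) => /=; last by rewrite addr0 addn0.
by rewrite addn1 [in RHS]big_ord_recr.
Qed.

Lemma card_after_block (R : pzSemiRingType) L :
  \sum_(a < L.+1 | after_block a) (1 : R) = (\sum_(v < L) ~~ c v)%N%:R.
Proof.
elim: L => [|L IH]; first by rewrite big_mkcond big_ord1 big_ord0.
rewrite big_mkcond big_ord_recr /= -big_mkcond /= IH big_ord_recr /= natrD.
by rewrite /after_block /=; case: (c L).
Qed.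

End PrefixCount.

Lemma prefix_count_true x : prefix_count (fun=> true) x = x.
Proof. by rewrite /prefix_count sum_nat_const card_ord muln1. Qed.

Lemma eq_prefix_count c c' : c =1 c' -> prefix_count c =1 prefix_count c'.
Proof. by move=> e x; apply: eq_bigr => v _; rewrite e. Qed.

Definition middle_block (n k v : nat) : bool := ~~ (n.+1 <= v < n.+1 + k)%N.

Lemma prefix_count_middle_block n k x :
  prefix_count (middle_block n k) x = (minn x n.+1 + (x - (n.+1 + k)))%N.
Proof.
elim: x => [|x IH]; first by rewrite /prefix_count big_ord0.
rewrite prefix_countS IH /middle_block.
by case: (leqP n.+1 x) => h1; case: (ltnP x (n.+1 + k)) => h2 /=; lia.
Qed.

Lemma middle_block_blocked n k : (\sum_(v < n.+1 + n + k) ~~ middle_block n k v)%N = k.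
Proof.
have := prefix_count_blocked (middle_block n k) (n.+1 + n + k).
by rewrite prefix_count_middle_block; lia.
Qed.

Lemma sum_triangle_sym (R : comPzRingType) (h : nat -> nat -> R) n :
  (forall a b, h a b = h b a) ->
  2 * \sum_(u < n) \sum_(a < u.+1) h a u =
  \sum_(a < n) \sum_(b < n) h a b + \sum_(a < n) h a a.
Proof.
move=> hC; elim: n => [|n IH]; first by rewrite !big_ord0 mulr0 addr0.
rewrite big_ord_recr /= mulrDr IH.
have -> : \sum_(a < n.+1) \sum_(b < n.+1) h a b = \sum_(a < n) \sum_(b < n) h a b
   + \sum_(a < n) h a n + (\sum_(b < n) h b n + h n n).
  rewrite big_ord_recr /=; congr (_ + _).
    by rewrite -big_split; apply: eq_bigr => i _; rewrite big_ord_recr.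
  by rewrite big_ord_recr /=; congr (_ + _); apply: eq_bigr => i _; rewrite hC.
rewrite [X in _ = _ + X]big_ord_recr [\sum_(a < n.+1) h a n]big_ord_recr /=.
ring.
Qed.

Section Weights.

Variables (R : realFieldType) (f : nat -> R).

Definition psum (n : nat) : R := \sum_(d < n) f d.

Definition row_sum (r x : nat) : R := \sum_(t < r.+1) f `|x - t|%N.

Definition grid_sum (r : nat) : R := \sum_(s < r.+1) row_sum r s.

Definition pair_sum (c : nat -> bool) (n : nat) : R :=
  \sum_(a < n) \sum_(b < n) f `|prefix_count c a - prefix_count c b|%N.

(* With [f e = (1 - p) ^+ e], the sum of the expected ages over the first [n] slots of a
   user scheduled with probability [p] in each slot and blocked where [c] is false. *)
Definition age_sum (c : nat -> bool) (n : nat) : R :=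
  \sum_(u < n) \sum_(a < u.+1) f `|prefix_count c a - prefix_count c u|%N.

Lemma psumS n : psum n.+1 = psum n + f n.
Proof. by rewrite /psum big_ord_recr. Qed.

Lemma eq_age_sum c c' n : c =1 c' -> age_sum c n = age_sum c' n.
Proof.
move=> /eq_prefix_count e; apply: eq_bigr => u _; apply: eq_bigr => a _.
by rewrite !e.
Qed.

Lemma age_sum_pair_sum c n : 2 * age_sum c n = pair_sum c n + n%:R * f 0.
Proof.
set h := fun a b => f `|prefix_count c a - prefix_count c b|%N.
rewrite /age_sum (@sum_triangle_sym _ h) => [|a b]; last by rewrite /h distnC.
rewrite /h; under [X in _ + X]eq_bigr do rewrite distnn.
by rewrite sumr_const card_ord mulr_natl.
Qed.

Lemma pair_sum_true r : pair_sum (fun=> true) r.+1 = grid_sum r.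
Proof.
by apply: eq_bigr => a _; apply: eq_bigr => b _; rewrite !prefix_count_true.
Qed.

(* Slots that follow a blocked slot repeat the prefix count of their predecessor;
   the remaining ones enumerate [0, prefix_count c L] exactly once. *)
Lemma pair_sum_decomp c L :
  pair_sum c L.+1 = grid_sum (prefix_count c L)
   + 2 * \sum_(a < L.+1 | after_block c a) row_sum (prefix_count c L) (prefix_count c a)
   + \sum_(a < L.+1 | after_block c a) \sum_(b < L.+1 | after_block c b)
       f `|prefix_count c a - prefix_count c b|%N.
Proof.
set r := prefix_count c L; set F := fun a b => f `|prefix_count c a - prefix_count c b|%N.
have split_row a : \sum_(b < L.+1) F a b =
    \sum_(b < L.+1 | after_block c b) F a b + row_sum r (prefix_count c a).
  rewrite (bigID (fun b : 'I_L.+1 => after_block c b)) /=.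
  by rewrite (sum_not_after_block c (fun t => f `|prefix_count c a - t|%N)).
have split_rows : \sum_(a < L.+1) row_sum r (prefix_count c a) =
   \sum_(a < L.+1 | after_block c a) row_sum r (prefix_count c a) + grid_sum r.
  rewrite (bigID (fun a : 'I_L.+1 => after_block c a)) /=.
  by rewrite (sum_not_after_block c (row_sum r)).
have split_cols : \sum_(a < L.+1) \sum_(b < L.+1 | after_block c b) F a b =
   \sum_(a < L.+1 | after_block c a) \sum_(b < L.+1 | after_block c b) F a b +
   \sum_(a < L.+1 | after_block c a) row_sum r (prefix_count c a).
  rewrite (bigID (fun a : 'I_L.+1 => after_block c a)) /=; congr (_ + _).
  rewrite exchange_big /=; apply: eq_bigr => b _.
  rewrite (sum_not_after_block c (fun t => f `|t - prefix_count c b|%N)).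
  by apply: eq_bigr => t _; rewrite distnC.
rewrite /pair_sum -/F; under eq_bigr do rewrite split_row.
rewrite big_split /= split_rows split_cols; ring.
Qed.

Lemma row_sum_diag t : row_sum t t = psum t.+1.
Proof.
elim: t => [|t IH]; first by rewrite /row_sum /psum !big_ord1.
rewrite /row_sum big_ord_recl psumS distn0 addrC; congr (_ + _).
by rewrite -IH; apply: eq_bigr => i _; rewrite /= /bump leq0n add1n; congr (f _); lia.
Qed.

Lemma row_sumE t n : row_sum (t + n) t = psum t.+1 + psum n.+1 - f 0.
Proof.
elim: n => [|n IH]; first by rewrite addn0 row_sum_diag /psum big_ord1 addrK.
rewrite addnS /row_sum big_ord_recr /= -/(row_sum (t + n) t) IH [psum n.+2]psumS.
have -> : `|t - (t + n).+1|%N = n.+1 by lia.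
ring.
Qed.

Lemma pair_sum_middle_block n k :
  pair_sum (middle_block n k) (n.+1 + n + k).+1 =
    grid_sum (n.+1 + n) + 2 * (k%:R * row_sum (n.+1 + n) n.+1) + k%:R ^+ 2 * f 0.
Proof.
set L := (n.+1 + n + k)%N; set c := middle_block n k.
have hL : prefix_count c L = (n.+1 + n)%N by rewrite prefix_count_middle_block /L; lia.
have hk : \sum_(a < L.+1 | after_block c a) (1 : R) = k%:R.
  by rewrite card_after_block middle_block_blocked.
have at_block (a : 'I_L.+1) : after_block c a -> prefix_count c a = n.+1.
  move=> /andP[a0]; rewrite /c /middle_block negbK prefix_count_middle_block; lia.
rewrite pair_sum_decomp hL.
have -> : \sum_(a < L.+1 | after_block c a) row_sum (n.+1 + n) (prefix_count c a) =
    k%:R * row_sum (n.+1 + n) n.+1.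
  by rewrite -hk mulr_suml; apply: eq_bigr => a ha; rewrite mul1r at_block.
congr (_ + _); rewrite expr2 -{1}hk !mulr_suml; apply: eq_bigr => a ha.
rewrite mul1r -hk mulr_suml; apply: eq_bigr => b hb.
by rewrite mul1r !at_block // distnn.
Qed.

Lemma grid_sumS r : grid_sum r.+1 = grid_sum r + 2 * (psum r.+2 - f 0) + f 0.
Proof.
rewrite -row_sum_diag /grid_sum /row_sum big_ord_recr /=.
have -> : \sum_(s < r.+1) \sum_(t < r.+2) f `|s - t|%N =
    \sum_(s < r.+1) \sum_(t < r.+1) f `|s - t|%N + \sum_(t < r.+1) f `|r.+1 - t|%N.
  by rewrite -big_split /=; apply: eq_bigr => s _; rewrite big_ord_recr /= distnC.
rewrite [X in _ = _ + 2 * (X - _) + _]big_ord_recr [X in _ + _ + X = _]big_ord_recr.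
by rewrite /= distnn; ring.
Qed.

Section NonnegativeWeights.

Hypothesis f_ge0 : forall e, 0 <= f e.

Lemma ler_psum : {homo psum : a b / (a <= b)%N >-> a <= b}.
Proof.
move=> a b /subnK <-; elim: (b - a)%N => [|d IH] //=.
by rewrite addSn psumS (le_trans IH) // lerDl.
Qed.

Lemma pair_sum_true_le_middle_block n k : f 0 = 0 ->
  psum (n.+1 + n + k).+1 <= psum n.+2 + psum n.+1 ->
  pair_sum (fun=> true) (n.+1 + n + k).+1 <= pair_sum (middle_block n k) (n.+1 + n + k).+1.
Proof.
move=> f0 tail_small.
rewrite pair_sum_true pair_sum_middle_block f0 mulr0 addr0 row_sumE f0 subr0.
elim: k tail_small => [|j IH] tail_small; first by rewrite addn0 mul0r mulr0 addr0.
have hj : psum (n.+1 + n + j).+1 <= psum n.+2 + psum n.+1.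
  by apply: le_trans tail_small; apply: ler_psum; lia.
move: tail_small; rewrite addnS grid_sumS f0 !subr0 addr0 -[j.+1%:R]natr1 => tail_small.
have := IH hj; lra.
Qed.

End NonnegativeWeights.

Hypothesis f_noninc : {homo f : a b / (a <= b)%N >-> b <= a}.

Lemma psum_concave x a b : (a + b = x + x.+1)%N ->
  psum a + psum b <= psum x + psum x.+1.
Proof.
wlog hab : a b / (a <= b)%N => [H|].
  by case: (leqP a b) => h e; [exact: H | rewrite addrC H 1?addnC // ltnW].
move=> e; have [d hd] : exists d, (a + d = x)%N by exists (x - a)%N; lia.
elim: d a b hab e hd => [|d IH] a b hab e hd.
  by have [-> ->] : a = x /\ b = x.+1 by lia.
have -> : b = b.-1.+1 by lia.
rewrite psumS; apply: le_trans (IH a.+1 b.-1 _ _ _); try lia.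
by rewrite psumS; have := @f_noninc a b.-1 ltac:(lia); lra.
Qed.

Lemma row_sum_le_mid n t : (t <= n.+1 + n)%N ->
  row_sum (n.+1 + n) t <= row_sum (n.+1 + n) n.+1.
Proof.
move=> ht; rewrite -{1}(subnKC ht) !row_sumE lerD2r [X in _ <= X]addrC.
by apply: psum_concave; lia.
Qed.

Section UnitWeights.

Hypotheses (f_01 : forall e, 0 <= f e <= 1) (f0 : f 0 = 1).

Lemma pair_sum_le_middle_block (c : nat -> bool) n k :
  (\sum_(v < n.+1 + n + k) ~~ c v)%N = k ->
  pair_sum c (n.+1 + n + k).+1 <= pair_sum (middle_block n k) (n.+1 + n + k).+1.
Proof.
move=> hk; set L := (n.+1 + n + k)%N.
have hL : prefix_count c L = (n.+1 + n)%N.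
  by have := prefix_count_blocked c L; rewrite hk /L; lia.
have hcard : \sum_(a < L.+1 | after_block c a) (1 : R) = k%:R.
  by rewrite card_after_block hk.
rewrite pair_sum_middle_block f0 mulr1 pair_sum_decomp hL.
apply: lerD; first apply: lerD => //.
  rewrite ler_pM2l // -hcard mulr_suml; apply: ler_sum => a _; rewrite mul1r.
  apply: row_sum_le_mid; rewrite -hL; apply: leq_prefix_count; have := ltn_ord a; lia.
rewrite expr2 -{1}hcard mulr_suml; apply: ler_sum => a _; rewrite mul1r -hcard.
by apply: ler_sum => b _; case/andP: (f_01 `|prefix_count c a - prefix_count c b|%N).
Qed.

Lemma age_sum_le_middle_block (c : nat -> bool) n k :
  (\sum_(v < n.+1 + n + k) ~~ c v)%N = k ->
  age_sum c (n.+1 + n + k).+1 <= age_sum (middle_block n k) (n.+1 + n + k).+1.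
Proof.
move=> /pair_sum_le_middle_block.
have := age_sum_pair_sum c (n.+1 + n + k).+1.
have := age_sum_pair_sum (middle_block n k) (n.+1 + n + k).+1.
lra.
Qed.

End UnitWeights.

End Weights.

Lemma age_sum_lin (R : realFieldType) (f g : nat -> R) a c n :
  age_sum (fun e => f e + a * g e) c n = age_sum f c n + a * age_sum g c n.
Proof.
rewrite /age_sum mulr_sumr -big_split; apply: eq_bigr => u _.
by rewrite mulr_sumr -big_split.
Qed.

Lemma ler_age_sum (R : realFieldType) (f g : nat -> R) c n :
  (forall e, f e <= g e) -> age_sum f c n <= age_sum g c n.
Proof. by move=> hfg; apply: ler_sum => u _; apply: ler_sum => a _. Qed.

Section PowerWeights.

Variables (R : realFieldType) (y : R).
Hypothesis y_01 : 0 <= y <= 1.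

Lemma expr_sub_merge2 n a b : (a + b <= n)%N ->
  y ^+ (n - a) + y ^+ (n - b) <= y ^+ n + y ^+ (n - (a + b)).
Proof.
move: y_01 => /andP[y0 y1] hab; set z := y ^+ (n - (a + b)).
have -> : y ^+ (n - a) = z * y ^+ b by rewrite -exprD; congr (_ ^+ _); lia.
have -> : y ^+ (n - b) = z * y ^+ a by rewrite -exprD; congr (_ ^+ _); lia.
have -> : y ^+ n = z * y ^+ a * y ^+ b by rewrite -!exprD; congr (_ ^+ _); lia.
have ha : 0 <= 1 - y ^+ a by rewrite subr_ge0 exprn_ile1.
have hb : 0 <= 1 - y ^+ b by rewrite subr_ge0 exprn_ile1.
have := mulr_ge0 (mulr_ge0 (exprn_ge0 (n - (a + b)) y0) ha) hb.
rewrite -/z; nra.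
Qed.

Lemma expr_sub_merge (I : Type) (s : seq I) (x : I -> nat) n :
  (\sum_(i <- s) x i <= n)%N ->
  \sum_(i <- s) y ^+ (n - x i) + y ^+ n <=
  (\sum_(i <- s) (1 : R)) * y ^+ n + y ^+ (n - \sum_(i <- s) x i).
Proof.
elim: s => [|i s IH] hx; first by rewrite !big_nil mul0r !add0r subn0.
rewrite !big_cons in hx *.
have := IH ltac:(lia); have := @expr_sub_merge2 n (x i) (\sum_(j <- s) x j) hx.
nra.
Qed.

Lemma age_sum_expr_antimono (c c' : nat -> bool) n : (forall v, c' v -> c v) ->
  age_sum (fun e => y ^+ e) c n <= age_sum (fun e => y ^+ e) c' n.
Proof.
move: y_01 => /andP[y0 y1] hcc'; apply: ler_sum => u _; apply: ler_sum => a _.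
apply: ler_wiXn2l => //; rewrite -!window_count ?leq_ord //.
by apply: leq_sum => v _; case: (c' v) (hcc' v) => // ->.
Qed.

End PowerWeights.

Lemma block_more (c : nat -> bool) L j : (\sum_(v < L) ~~ c v + j <= L)%N ->
  exists2 c' : nat -> bool, (forall v, c' v -> c v) &
    (\sum_(v < L) ~~ c' v = \sum_(v < L) ~~ c v + j)%N.
Proof.
elim: j => [|j IH] hj; first by exists c; rewrite ?addn0.
have [c0 c0c e0] := IH ltac:(lia).
have [v c0v] : exists v : 'I_L, c0 v.
  apply/existsP; apply: contraTT hj => /existsPn c0F.
  have := prefix_count_blocked c0 L.
  rewrite /prefix_count big1 => [|i _]; last by rewrite (negbTE (c0F i)).
  by rewrite e0; lia.
exists (fun x => c0 x && (x != val v)) => [x /andP[/c0c] //|].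
rewrite (bigD1 v) //= eqxx andbF addnS -e0 [in RHS](bigD1 v) //= c0v add0n.
by congr _.+1; apply: eq_bigr => i hi; rewrite hi andbT.
Qed.

Definition nat_ext (T : nat) (g : 'I_T -> bool) (v : nat) : bool :=
  oapp g true (insub v).

Lemma nat_ext_ord T (g : 'I_T -> bool) (u : 'I_T) : nat_ext g u = g u.
Proof. by rewrite /nat_ext valK. Qed.

Lemma nat_ext_out T (g : 'I_T -> bool) v : (T <= v)%N -> nat_ext g v.
Proof. by move=> h; rewrite /nat_ext insubN // -leqNgt. Qed.

Lemma nat_ext_true T (g : 'I_T -> bool) v : (forall u, g u) -> nat_ext g v.
Proof. by move=> h; rewrite /nat_ext; case: insub. Qed.

Section BlockingMatrix.

Variables (N T : nat) (sigma : 'I_N -> 'I_T -> bool).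
Hypothesis one_block : forall u : 'I_T, (\sum_i ~~ sigma i u <= 1)%N.

Definition all_unblocked (v : nat) : bool := [forall i, nat_ext (sigma i) v].

Lemma all_unblocked_count v :
  ((~~ all_unblocked v) : nat) = (\sum_(i < N) ~~ nat_ext (sigma i) v)%N.
Proof.
case: (ltnP v T) => [hv | hv]; last first.
  rewrite big1 => [|i _]; last by rewrite nat_ext_out.
  by apply/eqP; rewrite eqb0 negbK; apply/forallP => i; rewrite nat_ext_out.
pose w := Ordinal hv.
have ext_w i : nat_ext (sigma i) v = sigma i w by rewrite -nat_ext_ord.
rewrite /all_unblocked (eq_bigr (fun i => nat_of_bool (~~ sigma i w))) => [|i _]; last first.
  by rewrite ext_w.
case: (boolP [forall i, _]) => [/forallP all_v | /forallPn[i0]] /=.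
  by rewrite big1 // => i _; rewrite -ext_w all_v.
rewrite ext_w => blocked0; have := one_block w.
by rewrite (bigD1 i0) //= blocked0; lia.
Qed.

Lemma all_unblocked_blocked L : (L <= T)%N ->
  (\sum_(v < L) ~~ all_unblocked v <= \sum_(i < N) \sum_(u < T) ~~ sigma i u)%N.
Proof.
move=> hLT; apply: (@leq_trans (\sum_(v < T) ~~ all_unblocked v)).
  rewrite (big_ord_widen T (fun v => nat_of_bool (~~ all_unblocked v)) hLT) big_mkcond.
  by apply: leq_sum => v _; case: ifP.
under eq_bigr do rewrite all_unblocked_count.
rewrite exchange_big /=; apply: eq_leq; apply: eq_bigr => i _.
by apply: eq_bigr => u _; rewrite nat_ext_ord.
Qed.

(* Since at most one user is blocked per slot, the windows of blocked slots of
   the users are disjoint, and [expr_sub_merge] moves them all onto one user. *)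
Lemma age_sum_merge (R : realFieldType) (y : R) : 0 <= y <= 1 ->
  \sum_(i < N) age_sum (fun e => y ^+ e) (nat_ext (sigma i)) T
    + age_sum (fun e => y ^+ e) (fun=> true) T
  <= N%:R * age_sum (fun e => y ^+ e) (fun=> true) T
    + age_sum (fun e => y ^+ e) all_unblocked T.
Proof.
move=> y01; rewrite /age_sum exchange_big /=.
under eq_bigr do rewrite exchange_big /=.
rewrite mulr_sumr; under [X in _ <= X + _]eq_bigr do rewrite mulr_sumr.
rewrite -big_split -[X in _ <= X]big_split /=; apply: ler_sum => u _.
rewrite -big_split -[X in _ <= X]big_split /=; apply: ler_sum => a _.
have hau : (a <= u)%N := leq_ord a.
set x := fun i : 'I_N => (\sum_(a <= v < u) ~~ nat_ext (sigma i) v)%N.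
have all_x : (\sum_(a <= v < u) ~~ all_unblocked v)%N = (\sum_(i < N) x i)%N.
  by rewrite /x exchange_big /=; apply: eq_bigr => v _; exact: all_unblocked_count.
have dist_window (c : nat -> bool) :
    `|prefix_count c a - prefix_count c u|%N = (u - a - \sum_(a <= v < u) ~~ c v)%N.
  by rewrite -window_count //; have := window_count_blocked c a u; lia.
under eq_bigr do rewrite dist_window -/(x _).
rewrite !dist_window all_x big1_eq subn0.
have -> : N%:R = \sum_(i < N) (1 : R) by rewrite sumr_const card_ord.
apply: expr_sub_merge => //.
by rewrite -all_x; have := window_count_blocked all_unblocked a u; lia.
Qed.

End BlockingMatrix.

Lemma big_nat_ord_mkcond (R : Type) (idx : R) (op : Monoid.law idx) (F : nat -> R) a u T :
  (u <= T)%N ->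
  \big[op/idx]_(a <= v < u) F v =
  \big[op/idx]_(w < T) (if (a <= w < u)%N then F w else idx).
Proof.
move=> uT; rewrite big_geq_mkord (big_ord_widen_cond _ _ _ uT) big_mkcond.
by apply: eq_bigr => w _; case: (a <= w)%N; case: (w < u)%N.
Qed.

Section ExpectedAge.

Variables (N T : nat) (sigma : 'I_N -> 'I_T -> bool).

Definition served (s : {ffun 'I_T -> 'I_N}) (i : 'I_N) (v : nat) : bool :=
  [exists u : 'I_T, [&& val u == v, s u == i & sigma i u]].

Lemma servedE s i (w : 'I_T) : served s i w = (s w == i) && sigma i w.
Proof.
apply/existsP/andP => [[u /and3P[/eqP/val_inj -> ->]] //|[siw blocked]].
by exists w; rewrite eqxx siw blocked.
Qed.

Lemma ageE s i k :
  age s sigma i k = (\sum_(a < k.+1) \prod_(a <= v < k) ~~ served s i v)%N.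
Proof.
elim: k => [|k IH]; first by rewrite big_ord1 big_geq.
rewrite /= IH [in RHS]big_ord_recr /= big_geq // -/(served s i k).
have -> : (\sum_(a < k.+1) \prod_(a <= v < k.+1) ~~ served s i v =
    (\sum_(a < k.+1) \prod_(a <= v < k) ~~ served s i v) * ~~ served s i k)%N.
  by rewrite big_distrl; apply: eq_bigr => a _; rewrite big_nat_recr // leq_ord.
by case: (served s i k); rewrite /= ?muln0 // muln1 addn1.
Qed.

Variables (R : realType) (p : 'I_N -> R).
Hypothesis p_sum1 : \sum_j p j = 1.

(* Slots are scheduled independently, so the probability factors over the slots;
   an unblocked slot of the window avoids serving [i] with probability [1 - p i]. *)
Lemma prob_not_served i a u : (u <= T)%N ->
  \sum_s sched_prob p s * (\prod_(a <= v < u) ~~ served s i v)%N%:R =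
  (1 - p i) ^+ (\sum_(a <= v < u) nat_ext (sigma i) v)%N.
Proof.
move=> uT; pose G (w : 'I_T) (j : 'I_N) :=
  p j * (if (a <= w < u)%N then (~~ ((j == i) && sigma i w) : nat)%:R else 1).
have factor s : sched_prob p s * (\prod_(a <= v < u) ~~ served s i v)%N%:R =
    \prod_(w : 'I_T) G w (s w).
  rewrite natr_prod (big_nat_ord_mkcond _ _ _ uT) -big_split /=.
  by apply: eq_bigr => w _; rewrite /G servedE; case: (a <= w < u)%N.
have slot w : \sum_j G w j = (1 - p i) ^+ ((a <= w < u)%N && sigma i w).
  rewrite /G; case: (a <= w < u)%N => /=; last by under eq_bigr do rewrite mulr1.
  case: (sigma i w) => /=; last by under eq_bigr do rewrite andbF mulr1.
  rewrite expr1 (bigD1 i) //= eqxx mulr0 add0r.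
  have -> : 1 - p i = \sum_(j < N | j != i) p j.
    by rewrite -p_sum1 (bigD1 i) //= addrAC subrr add0r.
  by apply: eq_bigr => j ji; rewrite andbT ji mulr1.
rewrite (eq_bigr _ (fun s _ => factor s)).
rewrite -bigA_distr_bigA /=; under eq_bigr do rewrite slot.
rewrite prodrXr (big_nat_ord_mkcond _ _ _ uT); congr (_ ^+ _).
by apply: eq_bigr => w _; rewrite nat_ext_ord; case: (a <= w < u)%N.
Qed.

Lemma exp_ageE i (u : 'I_T) :
  let c := nat_ext (sigma i) in
  exp_age p sigma i u = \sum_(a < u.+1) (1 - p i) ^+ `|prefix_count c a - prefix_count c u|%N.
Proof.
rewrite /exp_age; under eq_bigr do rewrite ageE natr_sum mulr_sumr.
rewrite exchange_big /=; apply: eq_bigr => a _.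
by rewrite prob_not_served ?window_count // ?leq_ord // ltnW.
Qed.

End ExpectedAge.

Lemma payoffE (R : realType) N T (p : 'I_N -> R) (sigma : 'I_N -> 'I_T -> bool) :
  \sum_j p j = 1 -> payoff p sigma =
  T%:R^-1 * (N%:R^-1 *
    \sum_(i < N) age_sum (fun e => (1 - p i) ^+ e) (nat_ext (sigma i)) T).
Proof.
move=> p_sum1; rewrite /payoff -mulr_sumr exchange_big; congr (_ * (_ * _)).
by apply: eq_bigr => i _; apply: eq_bigr => u _; rewrite exp_ageE.
Qed.

Lemma ler_payoff (R : realType) N T (p p' : 'I_N -> R)
    (sigma sigma' : 'I_N -> 'I_T -> bool) :
  \sum_j p j = 1 -> \sum_j p' j = 1 ->
  \sum_(i < N) age_sum (fun e => (1 - p i) ^+ e) (nat_ext (sigma i)) T <=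
  \sum_(i < N) age_sum (fun e => (1 - p' i) ^+ e) (nat_ext (sigma' i)) T ->
  payoff p sigma <= payoff p' sigma'.
Proof.
move=> p_sum1 p'_sum1 le_sum; rewrite !payoffE //.
apply: ler_wpM2l; rewrite ?invr_ge0 ?ler0n //.
by apply: ler_wpM2l; rewrite ?invr_ge0 ?ler0n.
Qed.

Definition pow_deriv (R : realFieldType) (q : R) (e : nat) : R := e%:R * q ^+ e.-1.

Lemma pow_deriv_ge0 (R : realFieldType) (q : R) e : 0 <= q -> 0 <= pow_deriv q e.
Proof. by move=> q0; rewrite mulr_ge0 // exprn_ge0. Qed.

Lemma pow_tangent (R : realFieldType) (y q : R) e : 0 <= y -> 0 <= q ->
  q ^+ e + (y - q) * pow_deriv q e <= y ^+ e.
Proof.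
move=> y0 q0; rewrite /pow_deriv; elim: e => [|[|e] IH] /=.
- by rewrite mul0r mulr0 addr0.
- by rewrite !expr1 expr0 mulr1; lra.
rewrite !exprS in IH *; set Q := q ^+ e in IH *; set Y := y ^+ e in IH *.
have Q0 : 0 <= Q by exact: exprn_ge0.
have h1 : 0 <= y * (y * Y - (q * Q + (y - q) * (e.+1%:R * Q))).
  by apply: mulr_ge0 => //; rewrite subr_ge0.
have h2 : 0 <= e.+1%:R * Q * ((y - q) * (y - q)).
  by apply: mulr_ge0; [apply: mulr_ge0 | rewrite -expr2 sqr_ge0].
rewrite -[e.+2%:R]natr1; nra.
Qed.

Lemma expr1D_ge_quadratic (R : realFieldType) (x : R) m : 0 <= x ->
  2 + 2 * m%:R * x + (m%:R * m%:R - m%:R) * x ^+ 2 <= 2 * (1 + x) ^+ m.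
Proof.
move=> x0; elim: m => [|m IH]; first by rewrite expr0 !(mulr0, mul0r, subr0, addr0) mulr1.
rewrite [(1 + x) ^+ m.+1]exprS -natr1.
have h1 : 0 <= (1 + x) * (2 * (1 + x) ^+ m
    - (2 + 2 * m%:R * x + (m%:R * m%:R - m%:R) * x ^+ 2)).
  by apply: mulr_ge0; [lra | rewrite subr_ge0].
have hm : 0 <= m%:R * m%:R - m%:R :> R.
  by rewrite subr_ge0 -natrM ler_nat; case: m {IH h1} => // m; rewrite mulSn; lia.
have h2 : 0 <= (m%:R * m%:R - m%:R) * x ^+ 3 by rewrite mulr_ge0 ?exprn_ge0.
rewrite !expr2 in h1 h2 *; rewrite exprS expr2 in h2.
nra.
Qed.

Section DerivativeTail.

Variables (R : realFieldType) (N : nat).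
Hypothesis N_gt1 : (1 < N)%N.

Local Notation q := (1 - N%:R^-1 : R).

Lemma compl_unif_01 : 0 <= q <= 1.
Proof.
have N0 : 0 < N%:R :> R by rewrite ltr0n; lia.
have : N%:R^-1 <= 1 :> R by rewrite invf_le1 // ler1n; lia.
have : 0 <= N%:R^-1 :> R by rewrite invr_ge0 ltW.
by move=> *; apply/andP; split; lra.
Qed.

(* [\sum_(e > d) e q ^ (e - 1)] in closed form, using [1 / (1 - q) = N]. *)
Definition deriv_tail (d : nat) : R := q ^+ d * (d%:R * N%:R + N%:R ^+ 2).

Lemma deriv_tailS d : deriv_tail d - deriv_tail d.+1 = pow_deriv q d.+1.
Proof.
have N0 : N%:R != 0 :> R by rewrite pnatr_eq0; lia.
rewrite /deriv_tail /pow_deriv /= -natr1 [q ^+ d.+1]exprS; move: (q ^+ d) => Q.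
by field.
Qed.

Lemma psum_pow_deriv_tail a i :
  psum (pow_deriv q) (a.+1 + i) + deriv_tail (a + i) =
  psum (pow_deriv q) a.+1 + deriv_tail a.
Proof.
elim: i => [|i IH]; first by rewrite !addn0.
by rewrite !addnS psumS -IH -(deriv_tailS (a + i)); ring.
Qed.

Lemma deriv_tail_le1 m : (2 * N ^ 4 + 2 * N ^ 3 < m)%N -> deriv_tail m <= 1.
Proof.
move=> m_large.
have N0 : 0 < N%:R :> R by rewrite ltr0n; lia.
have N1 : 0 < N%:R - 1 :> R by rewrite subr_gt0 ltr1n.
set x := (N%:R - 1)^-1 : R; set z := N%:R^-1 : R.
have x0 : 0 < x by rewrite invr_gt0.
have z0 : 0 < z by rewrite invr_gt0.
have zx : z <= x by rewrite /z /x lef_pV2 ?posrE //; lra.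
have qx : q ^+ m * (1 + x) ^+ m = 1.
  by rewrite -exprMn /x /z [_ * _](_ : _ = 1) ?expr1n //; field; rewrite !gt_eqF.
have hmm : 2 * N%:R ^+ 2 * (m%:R * N%:R + N%:R ^+ 2) <= m%:R * m%:R - m%:R :> R.
  rewrite lerBrDr; have : (2 * N ^ 2 * (m * N + N ^ 2) + m <= m * m)%N.
    have : (m * (2 * N ^ 4 + 2 * N ^ 3 + 1) <= m * m)%N by rewrite leq_mul2l; lia.
    have : (N ^ 4 <= m * N ^ 4)%N by rewrite leq_pmull //; lia.
    by rewrite !expnS expn0 !muln1; nia.
  by rewrite -(ler_nat R) !(natrD, natrM, natrX).
have hz : 2 * (m%:R * N%:R + N%:R ^+ 2) <= (m%:R * m%:R - m%:R) * x ^+ 2 :> R.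
  apply: le_trans (_ : _ <= (m%:R * m%:R - m%:R) * z ^+ 2) _; last first.
    have mm0 : 0 <= m%:R * m%:R - m%:R :> R.
      by apply: le_trans hmm; rewrite !mulr_ge0 ?addr_ge0 ?exprn_ge0 ?mulr_ge0.
    by rewrite ler_wpM2l // !expr2; apply: ler_pM => //; exact: ltW.
  have -> : 2 * (m%:R * N%:R + N%:R ^+ 2) =
            2 * N%:R ^+ 2 * (m%:R * N%:R + N%:R ^+ 2) * z ^+ 2 :> R.
    by rewrite /z; field; rewrite gt_eqF.
  by apply: ler_wpM2r => //; exact: exprn_ge0 (ltW z0).
have P_large : m%:R * N%:R + N%:R ^+ 2 <= (1 + x) ^+ m.
  have := expr1D_ge_quadratic m (ltW x0).
  have : 0 <= 2 * m%:R * x :> R by rewrite !mulr_ge0 ?ler0n // ltW.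
  lra.
have Q0 : 0 <= q ^+ m by rewrite exprn_ge0 //; case/andP: compl_unif_01.
by rewrite /deriv_tail -[X in _ <= X]qx; apply: ler_wpM2l.
Qed.

Lemma psum_pow_deriv_le_mid n k : (0 < n)%N -> deriv_tail n.+1 <= 1 ->
  psum (pow_deriv q) (n.+1 + n + k).+1 <=
  psum (pow_deriv q) n.+2 + psum (pow_deriv q) n.+1.
Proof.
move=> n0 tail1; have [q0 _] := andP compl_unif_01.
have := psum_pow_deriv_tail n.+1 (n + k).
rewrite (_ : (n.+2 + (n + k) = (n.+1 + n + k).+1)%N); last by lia.
have : 0 <= deriv_tail (n.+1 + (n + k)).
  by apply: mulr_ge0; [exact: exprn_ge0 | rewrite addr_ge0 ?mulr_ge0 ?exprn_ge0].
have : 1 <= psum (pow_deriv q) n.+1.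
  apply: le_trans (ler_psum (fun e => pow_deriv_ge0 e q0) (_ : 2 <= n.+1)%N) => //.
  by rewrite /psum !big_ord_recr big_ord0 /pow_deriv /= mul0r !add0r expr0 mul1r.
lra.
Qed.

Lemma age_sum_deriv_true_le_middle_block n k : (0 < n)%N -> deriv_tail n.+1 <= 1 ->
  age_sum (pow_deriv q) (fun=> true) (n.+1 + n + k).+1 <=
  age_sum (pow_deriv q) (middle_block n k) (n.+1 + n + k).+1.
Proof.
move=> n0 tail1; have [q0 _] := andP compl_unif_01.
have d0 : pow_deriv q 0 = 0 by rewrite /pow_deriv mul0r.
have := age_sum_pair_sum (pow_deriv q) (fun=> true) (n.+1 + n + k).+1.
have := age_sum_pair_sum (pow_deriv q) (middle_block n k) (n.+1 + n + k).+1.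
have := pair_sum_true_le_middle_block (fun e => pow_deriv_ge0 e q0) d0
  (psum_pow_deriv_le_mid k n0 tail1).
rewrite d0 mulr0 !addr0; lra.
Qed.

End DerivativeTail.

Lemma sum_centered_ge0 (R : numDomainType) (I : finType) (w X : I -> R) (j : I) (A : R) :
  \sum_i w i = 0 -> 0 <= w j -> (forall i, i != j -> X i = A) -> A <= X j ->
  0 <= \sum_i w i * X i.
Proof.
move=> w0 wj XA AX.
have -> : \sum_i w i * X i = \sum_i w i * (X i - A) + (\sum_i w i) * A.
  by rewrite mulr_suml -big_split /=; apply: eq_bigr => i _; rewrite mulrBr subrK.
rewrite w0 mul0r addr0 (bigD1 j) //= big1 ?addr0 => [|i ij].
  by rewrite mulr_ge0 // subr_ge0.
by rewrite XA ?subrr ?mulr0.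
Qed.

Lemma sum_unif (R : realFieldType) N : (0 < N)%N -> \sum_(i < N) (N%:R^-1 : R) = 1.
Proof.
by move=> N0; rewrite sumr_const card_ord -[_^-1 *+ N]mulr_natl mulfV // pnatr_eq0 -lt0n.
Qed.

Section MiddleBlocking.

Variables (N T n k : nat) (j : 'I_N).
Hypothesis horizon : T = (n.+1 + n + k).+1.

Local Notation sbar := (@sigma_bar N T j n.+1 k).

Lemma nat_ext_sigma_bar_self : nat_ext (sbar j) =1 middle_block n k.
Proof.
move=> v; rewrite /nat_ext; case: insubP => [u _ <- | hv] /=.
  by rewrite /sigma_bar /middle_block eqxx.
rewrite /middle_block (_ : (v < n.+1 + k)%N = false) ?andbF //.
by apply/negbTE; move: hv; rewrite -!leqNgt horizon; lia.
Qed.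

Lemma nat_ext_sigma_bar_other i : i != j -> nat_ext (sbar i) =1 (fun=> true).
Proof. by move=> hij v; apply: nat_ext_true => u; rewrite /sigma_bar (negbTE hij). Qed.

Lemma sigma_bar_one_block (u : 'I_T) : (\sum_i ~~ sbar i u <= 1)%N.
Proof.
rewrite (bigD1 j) //= big1 ?addn0; first by case: (~~ _).
by move=> i hi; rewrite /sigma_bar (negbTE hi).
Qed.

Lemma sigma_bar_blocked : (\sum_(i < N) \sum_(u < T) ~~ sbar i u)%N = k.
Proof.
rewrite (bigD1 j) //= [X in (_ + X)%N]big1 ?addn0 => [|i hi]; last first.
  by apply: big1 => u _; rewrite /sigma_bar (negbTE hi).
under eq_bigr do rewrite -nat_ext_ord nat_ext_sigma_bar_self.
rewrite -(big_mkord xpredT (fun v => nat_of_bool (~~ middle_block n k v))) horizon.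
rewrite big_mkord big_ord_recr /= middle_block_blocked /middle_block.
by rewrite (_ : (n.+1 + n + k < n.+1 + k)%N = false) ?andbF ?addn0 //; lia.
Qed.

Lemma age_sum_sigma_bar (R : realFieldType) (f : nat -> R) :
  \sum_(i < N) age_sum f (nat_ext (sbar i)) T + age_sum f (fun=> true) T =
  N%:R * age_sum f (fun=> true) T + age_sum f (middle_block n k) T.
Proof.
have -> : N%:R * age_sum f (fun=> true) T = \sum_(i < N) age_sum f (fun=> true) T.
  by rewrite sumr_const card_ord mulr_natl.
rewrite (bigD1 j) //= [in RHS](bigD1 j) //= (eq_age_sum _ _ nat_ext_sigma_bar_self).
rewrite (eq_bigr (fun=> age_sum f (fun=> true) T)) => [|i hij]; first ring.
exact: eq_age_sum (nat_ext_sigma_bar_other hij).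
Qed.

Lemma age_sum_le_sigma_bar (R : realFieldType) (y : R) (sigma : 'I_N -> 'I_T -> bool) :
  0 <= y <= 1 -> (\sum_(i < N) \sum_(u < T) ~~ sigma i u <= k)%N ->
  (forall u : 'I_T, (\sum_i ~~ sigma i u <= 1)%N) ->
  \sum_(i < N) age_sum (fun e => y ^+ e) (nat_ext (sigma i)) T <=
  \sum_(i < N) age_sum (fun e => y ^+ e) (nat_ext (sbar i)) T.
Proof.
move=> y01 blocked_k one_block.
rewrite -(lerD2r (age_sum (fun e => y ^+ e) (fun=> true) T)) age_sum_sigma_bar.
apply: le_trans (age_sum_merge one_block y01) _; rewrite lerD2l.
set L := (n.+1 + n + k)%N; set c := all_unblocked sigma.
have blocked_le : (\sum_(v < L) ~~ c v <= k)%N.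
  by apply: leq_trans blocked_k; apply: (all_unblocked_blocked one_block); rewrite horizon.
have [c' c'c blocked_c'] := @block_more c L (k - \sum_(v < L) ~~ c v) ltac:(lia).
apply: le_trans (age_sum_expr_antimono y01 T c'c) _; rewrite horizon.
have [y0 y1] := andP y01.
apply: age_sum_le_middle_block; rewrite ?expr0 //.
- by move=> a b; apply: ler_wiXn2l.
- by move=> e; rewrite exprn_ge0 // exprn_ile1.
- by rewrite blocked_c'; lia.
Qed.

Lemma sigma_bar_feasible (R : realType) (alpha : R) :
  alpha * T%:R = k%:R -> feasible alpha sbar.
Proof.
move=> hk; split; last exact: sigma_bar_one_block.
by rewrite hk; under eq_bigr do rewrite -natr_sum; rewrite -natr_sum sigma_bar_blocked.
Qed.

(* Tangent line of [y ^+ e] at [y = 1 - 1/N]: the first-order change of the age sums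
   cancels on the users left unblocked because the weights [1/N - p i] sum to zero,
   and the blocked user [j] (with [p j <= 1/N]) contributes a nonnegative term. *)
Lemma age_sum_sigma_bar_unif_le (R : realType) (p : 'I_N -> R) :
  (1 < N)%N -> (0 < n)%N -> deriv_tail R N n.+1 <= 1 -> pmf p -> p j <= N%:R^-1 ->
  \sum_(i < N) age_sum (fun e => (1 - N%:R^-1) ^+ e) (nat_ext (sbar i)) T <=
  \sum_(i < N) age_sum (fun e => (1 - p i) ^+ e) (nat_ext (sbar i)) T.
Proof.
move=> N_gt1 n0 tail1 [p0 p_sum1] pj.
set q := 1 - N%:R^-1 : R; have [q0 _] := andP (compl_unif_01 R N_gt1).
have tangent i : age_sum (fun e => q ^+ e) (nat_ext (sbar i)) T
    + (N%:R^-1 - p i) * age_sum (pow_deriv q) (nat_ext (sbar i)) T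
    <= age_sum (fun e => (1 - p i) ^+ e) (nat_ext (sbar i)) T.
  rewrite -age_sum_lin; apply: ler_age_sum => e.
  have -> : N%:R^-1 - p i = 1 - p i - q by rewrite /q; ring.
  apply: pow_tangent => //; rewrite subr_ge0 -p_sum1 (bigD1 i) //= lerDl.
  exact: sumr_ge0.
apply: le_trans (ler_sum _ (fun i _ => tangent i)); rewrite big_split /= lerDl.
apply: (@sum_centered_ge0 _ _ _ _ j (age_sum (pow_deriv q) (fun=> true) T)).
- by rewrite sumrB sum_unif ?p_sum1 ?subrr //; lia.
- by rewrite subr_ge0.
- by move=> i ij; apply: eq_age_sum; exact: nat_ext_sigma_bar_other.
rewrite (eq_age_sum _ _ nat_ext_sigma_bar_self) horizon.
exact: age_sum_deriv_true_le_middle_block.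
Qed.

End MiddleBlocking.

Lemma exists_le_avg (R : realFieldType) N (p : 'I_N -> R) : (0 < N)%N ->
  \sum_i p i = 1 -> exists j, p j <= N%:R^-1.
Proof.
move=> N0 p_sum1; apply/existsP; apply: contraT => /existsPn p_large.
have : \sum_(i < N) (N%:R^-1 : R) < \sum_i p i.
  rewrite (bigD1 (Ordinal N0)) //= [X in _ < X](bigD1 (Ordinal N0)) //=.
  by rewrite ltr_leD ?ltNge ?p_large // ler_sum // => i _; rewrite ltW // ltNge p_large.
by rewrite sum_unif // p_sum1 ltxx.
Qed.

Lemma feasible_blocked (R : realType) N T (alpha : R) k (sigma : 'I_N -> 'I_T -> bool) :
  alpha * T%:R = k%:R -> feasible alpha sigma ->
  (\sum_(i < N) \sum_(u < T) ~~ sigma i u <= k)%N.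
Proof.
move=> hk [+ _]; rewrite hk; under eq_bigr do rewrite -natr_sum.
by rewrite -natr_sum ler_nat.
Qed.

Lemma exists_large_gap (R : realType) (alpha : R) (M : nat) : alpha < 1 ->
  exists T0 : nat, forall T m : nat,
    (T0 <= T)%N -> (1 - alpha) * T%:R = (2 * m)%:R -> (M < m)%N.
Proof.
move=> ha1; have gap0 : 0 < 1 - alpha by rewrite subr_gt0.
have bound0 : 0 <= (2 * M)%:R / (1 - alpha) by rewrite divr_ge0 // ltW.
exists (Num.Def.archi_bound ((2 * M)%:R / (1 - alpha))) => T m T0T hm.
have : (2 * M)%:R / (1 - alpha) < T%:R.
  by apply: lt_le_trans (archi_boundP bound0) _; rewrite ler_nat.
by rewrite ltr_pdivrMr // mulrC hm ltr_nat; lia.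
Qed.

Theorem theorem7 (R : realType) (N : nat) (hN : (2 <= N)%N) (alpha : R)
    (ha0 : 0 < alpha) (ha1 : alpha < 1) :
  exists T0 : nat, forall (T k m : nat), (T0 <= T)%N ->
    alpha * T%:R = k%:R -> (1 - alpha) * T%:R = (2 * m)%:R ->
    forall j : 'I_N,
      let pbar : 'I_N -> R := @unif R N in
      let sbar : 'I_N -> 'I_T -> bool := @sigma_bar N T j m k in
      [/\ feasible alpha sbar,
          (forall sigma : 'I_N -> 'I_T -> bool, feasible alpha sigma ->
             payoff pbar sigma <= payoff pbar sbar)
        & (forall p : 'I_N -> R, pmf p ->
             exists2 sigma : 'I_N -> 'I_T -> bool, feasible alpha sigma &
               forall sigma' : 'I_N -> 'I_T -> bool, feasible alpha sigma' ->
                 payoff pbar sigma' <= payoff p sigma)].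
Proof.
have [T0 T0_gap] := exists_large_gap (2 * N ^ 4 + 2 * N ^ 3) ha1.
exists T0 => T k m T0T hk hm j pbar sbar; rewrite {}/pbar {}/sbar.
have m_large := T0_gap T m T0T hm.
have hT : T = (k + 2 * m)%N.
  by apply/eqP; rewrite -(eqr_nat R) natrD -hk -hm; apply/eqP; ring.
have [n m_eq] : exists n, m = n.+1 by exists m.-1; lia.
subst m; have {hT} hT : T = (n.+1 + n + k).+1 by lia.
have tail1 : deriv_tail R N n.+1 <= 1 by apply: deriv_tail_le1; lia.
have unif_sum1 : \sum_i @unif R N i = 1 by apply: sum_unif; lia.
have best_response j' (sigma : 'I_N -> 'I_T -> bool) : feasible alpha sigma ->
    payoff (@unif R N) sigma <= payoff (@unif R N) (@sigma_bar N T j' n.+1 k).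
  move=> feas; apply: ler_payoff => //; rewrite /unif.
  apply: age_sum_le_sigma_bar => //.
  - exact: compl_unif_01.
  - exact: feasible_blocked feas.
  - by case: feas.
split; [exact: (sigma_bar_feasible j hT hk) | exact: best_response |].
move=> p p_pmf; have [j0 pj0] := exists_le_avg (ltnW hN) p_pmf.2.
exists (@sigma_bar N T j0 n.+1 k); first exact: (sigma_bar_feasible j0 hT hk).
move=> sigma' /(best_response j0) /le_trans; apply; apply: ler_payoff => //.
  by case: p_pmf.
by rewrite /unif; apply: age_sum_sigma_bar_unif_le => //; lia.
Qed.
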